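(* Consider the network SIS system $\dot x = (-D+B-XB)x$ on $\Xi_n$, where $B$ is irreducible, and suppose $\phi:=s(-D+B)>0$. Let $y\in\mathbb{R}^n$, $y>0$ (entrywise), satisfy $(-D+B)y=\phi y$ with $\max_i y_i=1$. For $\epsilon\in(0,1)$ define $\mathcal{M}_\epsilon=\{x\in\mathbb{R}^n:\ \epsilon y_i\le x_i\le 1\ \forall i\}$, with faces $P_i=\{x: x_i=\epsilon y_i,\ x_j\in[\epsilon y_j,1]\ \forall j\ne i\}$ and $Q_i=\{x: x_i=1,\ x_j\in[\epsilon y_j,1]\ \forall j\ne i\}$. Then there exists $\epsilon>0$ sufficiently small such that: (i) both $\mathcal{M}_\epsilon$ and its interior are positively invariant for the system; (ii) for each $i=1,\dots,n$, $-\dot x_i<0$ for all $x\in P_i$ and $\dot x_i<0$ for all $x\in Q_i$; (iii) for every $x(0)\in\partial\Xi_n\setminus\{0_n\}$ there is a finite $\bar\kappa>0$ with $x(\bar\kappa)\in\mathcal{M}_\epsilon$; and (iv) every equilibrium $x\in\Xi_n\setminus\{0_n\}$ of the system satisfies $x\in\operatorname{int}(\mathcal{M}_\epsilon)$.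
   Context: Network SIS model: $n\ge2$, $D=\operatorname{diag}(d_1,\dots,d_n)$ with $d_i>0$, $B=(b_{ij})\in\mathbb{R}^{n\times n}$ entrywise nonnegative, $X=\operatorname{diag}(x_1,\dots,x_n)$; componentwise $\dot x_i=-d_ix_i+(1-x_i)\sum_j b_{ij}x_j$. $B$ irreducible is equivalent to the associated directed graph (edge from $j$ to $i$ iff $b_{ij}\neq 0$) being strongly connected. $\Xi_n=\{x\in\mathbb{R}^n: 0\le x_i\le 1\ \forall i\}$; $\partial\Xi_n$ is its boundary. For a square matrix $M$, $s(M)$ is the largest real part of its eigenvalues. Vector inequalities are entrywise. *)

From Stdlib Require Import Reals Lra.
Open Scope R_scope.

(* Vectors of R^n are functions nat -> R (only indices < n matter);
   n x n matrices are functions nat -> nat -> R. *)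

Fixpoint rsum (n : nat) (f : nat -> R) : R :=
  match n with
  | O => 0
  | S m => rsum m f + f m
  end.

Definition mat_vec (n : nat) (M : nat -> nat -> R) (v : nat -> R) (i : nat) : R :=
  rsum n (fun j => M i j * v j).

Definition minusD_plus_B (d : nat -> R) (B : nat -> nat -> R) : nat -> nat -> R :=
  fun i j => B i j - (if Nat.eqb i j then d i else 0).

(* a + i b is a (complex) eigenvalue of the real n x n matrix M:
   there is a nonzero complex vector u + i v with M (u + i v) = (a + i b)(u + i v). *)
Definition is_eigenvalue_C (n : nat) (M : nat -> nat -> R) (a b : R) : Prop :=
  exists u v : nat -> R,
    (exists i, (i < n)%nat /\ (u i <> 0 \/ v i <> 0)) /\
    (forall i, (i < n)%nat -> mat_vec n M u i = a * u i - b * v i) /\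
    (forall i, (i < n)%nat -> mat_vec n M v i = b * u i + a * v i).

Definition spectral_abscissa (n : nat) (M : nat -> nat -> R) (s : R) : Prop :=
  (exists b, is_eigenvalue_C n M s b) /\
  (forall a b, is_eigenvalue_C n M a b -> a <= s).

(* directed graph of B: edge from j to i iff b_ij <> 0; reach j i = directed path j ~> i *)
Inductive reach (n : nat) (B : nat -> nat -> R) : nat -> nat -> Prop :=
  | reach_edge : forall j i, (j < n)%nat -> (i < n)%nat -> B i j <> 0 -> reach n B j i
  | reach_trans : forall j k i, reach n B j k -> reach n B k i -> reach n B j i.

(* B irreducible <-> its graph is strongly connected *)
Definition irreducible (n : nat) (B : nat -> nat -> R) : Prop :=
  forall i j, (i < n)%nat -> (j < n)%nat -> i <> j -> reach n B j i.

Definition sis_field (n : nat) (d : nat -> R) (B : nat -> nat -> R) (x : nat -> R) (i : nat) : R :=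
  - d i * x i + (1 - x i) * rsum n (fun j => B i j * x j).

Definition is_solution (n : nat) (d : nat -> R) (B : nat -> nat -> R) (x : R -> nat -> R) : Prop :=
  forall t, 0 <= t -> forall i, (i < n)%nat ->
    derivable_pt_lim (fun s => x s i) t (sis_field n d B (x t) i).

Definition in_Xi (n : nat) (x : nat -> R) : Prop :=
  forall i, (i < n)%nat -> 0 <= x i <= 1.

Definition in_boundary_Xi (n : nat) (x : nat -> R) : Prop :=
  in_Xi n x /\ exists i, (i < n)%nat /\ (x i = 0 \/ x i = 1).

Definition is_zero_vec (n : nat) (x : nat -> R) : Prop :=
  forall i, (i < n)%nat -> x i = 0.

Definition in_M (n : nat) (eps : R) (y x : nat -> R) : Prop :=
  forall i, (i < n)%nat -> eps * y i <= x i <= 1.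

Definition in_int_M (n : nat) (eps : R) (y x : nat -> R) : Prop :=
  forall i, (i < n)%nat -> eps * y i < x i < 1.

Definition in_P (n : nat) (eps : R) (y : nat -> R) (i : nat) (x : nat -> R) : Prop :=
  x i = eps * y i /\ forall j, (j < n)%nat -> j <> i -> eps * y j <= x j <= 1.

Definition in_Q (n : nat) (eps : R) (y : nat -> R) (i : nat) (x : nat -> R) : Prop :=
  x i = 1 /\ forall j, (j < n)%nat -> j <> i -> eps * y j <= x j <= 1.

Definition pos_invariant (n : nat) (d : nat -> R) (B : nat -> nat -> R) (S : (nat -> R) -> Prop) : Prop :=
  forall x : R -> nat -> R, is_solution n d B x -> S (x 0) -> forall t, 0 <= t -> S (x t).

(* The Perron vector [y] turns the box [eps y <= x <= 1] into a trapping region: on the face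
   [x_i = c y_i] of any box [c y <= x] with [c (phi + d_i) <= phi / 2] the infection rate
   [sum_j b_ij x_j >= c (phi + d_i) y_i] beats both recovery and saturation, so [x_i] increases
   at rate at least [c y_i phi / 2], while on [x_i = 1] the field is [- d_i < 0].  Invariance
   follows from a barrier argument for inward-pointing fields.  Irreducibility spreads
   infection to every node instantly, after which the exponential barrier [c e^(phi t / 4) y]
   climbs to [eps y] in finite time; the same face estimate shows that a nonzero equilibrium
   [x] has [min_i x_i / y_i > 2 eps]. *)

From Stdlib Require Import Reals Lra Lia Classical.
Open Scope R_scope.

Lemma rsum_ext n f g : (forall j, (j < n)%nat -> f j = g j) -> rsum n f = rsum n g.
Proof.
  induction n as [|n IH]; intros H; simpl; [reflexivity|].
  rewrite IH, H; [reflexivity|lia|intros; apply H; lia].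
Qed.

Lemma rsum_le n f g : (forall j, (j < n)%nat -> f j <= g j) -> rsum n f <= rsum n g.
Proof.
  induction n as [|n IH]; intros H; simpl; [lra|].
  assert (f n <= g n) by (apply H; lia).
  assert (rsum n f <= rsum n g) by (apply IH; intros; apply H; lia).
  lra.
Qed.

Lemma rsum_zero n : rsum n (fun _ => 0) = 0.
Proof. induction n as [|n IH]; simpl; [|rewrite IH]; lra. Qed.

Lemma rsum_nonneg n f : (forall j, (j < n)%nat -> 0 <= f j) -> 0 <= rsum n f.
Proof. intros H. rewrite <- (rsum_zero n). now apply rsum_le. Qed.

Lemma rsum_ge_term n f k :
  (forall j, (j < n)%nat -> 0 <= f j) -> (k < n)%nat -> f k <= rsum n f.
Proof.
  induction n as [|n IH]; intros H Hk; simpl; [lia|].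
  assert (0 <= f n) by (apply H; lia).
  destruct (Nat.eq_dec k n) as [->|Hkn].
  - assert (0 <= rsum n f) by (apply rsum_nonneg; intros; apply H; lia). lra.
  - assert (f k <= rsum n f) by (apply IH; [intros; apply H|]; lia). lra.
Qed.

Lemma rsum_plus n f g : rsum n (fun j => f j + g j) = rsum n f + rsum n g.
Proof. induction n as [|n IH]; simpl; [|rewrite IH]; lra. Qed.

Lemma rsum_scal n c f : rsum n (fun j => c * f j) = c * rsum n f.
Proof. induction n as [|n IH]; simpl; [|rewrite IH]; lra. Qed.

Lemma rsum_delta n i a g : (i < n)%nat ->
  rsum n (fun j => (if Nat.eqb i j then a else 0) * g j) = a * g i.
Proof.
  induction n as [|n IH]; intros Hi; simpl; [lia|].
  destruct (Nat.eq_dec i n) as [->|Hin].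
  - rewrite Nat.eqb_refl, (rsum_ext n _ (fun _ => 0)), rsum_zero; [lra|].
    intros j Hj. destruct (Nat.eqb_spec n j); [lia|lra].
  - rewrite IH by lia. destruct (Nat.eqb_spec i n); [lia|lra].
Qed.

Lemma mat_vec_minusD_plus_B n d B v i : (i < n)%nat ->
  mat_vec n (minusD_plus_B d B) v i = rsum n (fun j => B i j * v j) - d i * v i.
Proof.
  intros Hi. unfold mat_vec, minusD_plus_B.
  rewrite (rsum_ext n _ (fun j => B i j * v j + (-1) * ((if Nat.eqb i j then d i else 0) * v j)))
    by (intros; ring).
  rewrite rsum_plus, rsum_scal, rsum_delta by exact Hi. ring.
Qed.

Lemma finite_pos_lower_bound n (a : nat -> R) : (forall i, (i < n)%nat -> 0 < a i) ->
  exists c, 0 < c /\ forall i, (i < n)%nat -> c <= a i.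
Proof.
  induction n as [|n IH]; intros H; [exists 1; split; [lra|intros; lia]|].
  destruct IH as [c [Hc Hca]]; [intros; apply H; lia|].
  assert (0 < a n) by (apply H; lia).
  exists (Rmin c (a n)); split; [now apply Rmin_glb_lt|].
  intros i Hi. destruct (Nat.eq_dec i n) as [->|]; [apply Rmin_r|].
  apply Rle_trans with c; [apply Rmin_l|apply Hca; lia].
Qed.

Lemma finite_argmin n (f : nat -> R) : (0 < n)%nat ->
  exists i, (i < n)%nat /\ forall j, (j < n)%nat -> f i <= f j.
Proof.
  induction n as [|n IH]; intros Hn; [lia|].
  destruct (Nat.eq_dec n 0) as [->|Hn0].
  { exists 0%nat; split; [lia|]. intros j Hj. replace j with 0%nat by lia. lra. }
  destruct IH as [i [Hi Hmin]]; [lia|].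
  destruct (Rle_dec (f i) (f n)).
  - exists i; split; [lia|]. intros j Hj.
    destruct (Nat.eq_dec j n) as [->|]; [assumption|apply Hmin; lia].
  - exists n; split; [lia|]. intros j Hj.
    destruct (Nat.eq_dec j n) as [->|]; [lra|]. specialize (Hmin j ltac:(lia)). lra.
Qed.

Lemma finite_common_delta n (P : nat -> R -> Prop) :
  (forall i, (i < n)%nat -> exists del, 0 < del /\ forall s, 0 <= s < del -> P i s) ->
  exists del, 0 < del /\ forall i, (i < n)%nat -> forall s, 0 <= s < del -> P i s.
Proof.
  induction n as [|n IH]; intros H; [exists 1; split; [lra|intros; lia]|].
  destruct IH as [c [Hc Hcd]]; [intros; apply H; lia|].
  destruct (H n ltac:(lia)) as [e [He Hed]].
  exists (Rmin c e); split; [now apply Rmin_glb_lt|].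
  assert (Rmin c e <= c) by apply Rmin_l. assert (Rmin c e <= e) by apply Rmin_r.
  intros i Hi s Hs. destruct (Nat.eq_dec i n) as [->|].
  - apply Hed; lra.
  - apply Hcd; lra || lia.
Qed.

Lemma not_zero_vec_ex n (x : nat -> R) : ~ is_zero_vec n x -> exists k, (k < n)%nat /\ x k <> 0.
Proof.
  intros H. apply NNPP. intros Hno. apply H. intros i Hi.
  apply NNPP. intros Hxi. apply Hno. now exists i.
Qed.
Lemma derivable_pt_lim_pos_right f x l : derivable_pt_lim f x l -> 0 < l ->
  exists del, 0 < del /\ forall h, 0 < h < del -> f x < f (x + h).
Proof.
  intros Hf Hl. destruct (Hf l Hl) as [del Hdel]. exists del; split; [apply cond_pos|].
  intros h Hh.
  assert (Hq : Rabs ((f (x + h) - f x) / h - l) < l)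
    by (apply Hdel; [lra|rewrite Rabs_right; lra]).
  apply Rabs_def2 in Hq.
  assert (0 < (f (x + h) - f x) / h * h) by (apply Rmult_lt_0_compat; lra).
  replace ((f (x + h) - f x) / h * h) with (f (x + h) - f x) in * by (field; lra).
  lra.
Qed.

Lemma continuity_pt_pos_nbhd f x : continuity_pt f x -> 0 < f x ->
  exists del, 0 < del /\ forall s, Rabs (s - x) < del -> 0 < f s.
Proof.
  intros Hc Hfx. destruct (Hc (f x) Hfx) as [del [Hdel Hd]]. exists del; split; [exact Hdel|].
  intros s Hs. destruct (Req_dec s x) as [->|Hsx]; [exact Hfx|].
  assert (Hq : Rabs (f s - f x) < f x) by (apply (Hd s); split; [split; [exact I|congruence]|exact Hs]).
  apply Rabs_def2 in Hq. lra.
Qed.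

Lemma derivable_pt_lim_exp_affine c r a t :
  derivable_pt_lim (fun s => c * exp (r * (s - a))) t (c * r * exp (r * (t - a))).
Proof.
  assert (Hlin : derivable_pt_lim (fun s => r * (s - a)) t r).
  { assert (Hsh := derivable_pt_lim_minus id (fct_cte a) t _ _
                     (derivable_pt_lim_id t) (derivable_pt_lim_const a t)).
    assert (H := derivable_pt_lim_scal _ r _ _ Hsh).
    unfold mult_real_fct, minus_fct, id, fct_cte in H.
    now rewrite Rminus_0_r, Rmult_1_r in H. }
  replace (c * r * exp (r * (t - a))) with (c * (exp (r * (t - a)) * r)) by ring.
  exact (derivable_pt_lim_scal _ c _ _
           (derivable_pt_lim_comp _ exp t _ _ Hlin (derivable_pt_lim_exp _))).
Qed.

Lemma exp_le a b : a <= b -> exp a <= exp b.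
Proof. intros [Hab|Hab]; [left; now apply exp_increasing|rewrite Hab; lra]. Qed.

Lemma exp_hitting_time c e r s : 0 < c <= e -> 0 < r ->
  exists T, s <= T /\ c * exp (r * (T - s)) = e.
Proof.
  intros Hc Hr.
  assert (Hq : 1 <= e / c).
  { apply (Rmult_le_reg_r c); [lra|]. replace (e / c * c) with e by (field; lra). lra. }
  assert (Hln : 0 <= ln (e / c)).
  { rewrite <- ln_1. destruct Hq as [Hq|Hq]; [left; apply ln_increasing; lra|rewrite Hq; lra]. }
  exists (s + ln (e / c) / r). split.
  - assert (0 <= ln (e / c) / r) by (apply Rmult_le_pos; [lra|left; now apply Rinv_0_lt_compat]).
    lra.
  - replace (r * (s + ln (e / c) / r - s)) with (ln (e / c)) by (field; lra).
    rewrite exp_ln by (apply Rdiv_lt_0_compat; lra). field. lra.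
Qed.

Lemma nonneg_at_left_limit f a T : a < T -> continuity_pt f T ->
  (forall s, a <= s < T -> 0 <= f s) -> 0 <= f T.
Proof.
  intros HaT Hc Hs. apply Rnot_lt_le. intros HfT.
  destruct (continuity_pt_pos_nbhd (fun s => - f s) T) as [del [Hdel Hd]].
  { now apply continuity_pt_opp. }
  { lra. }
  set (s := T - Rmin del (T - a) / 2).
  assert (Rmin del (T - a) <= del) by apply Rmin_l.
  assert (Rmin del (T - a) <= T - a) by apply Rmin_r.
  assert (0 < Rmin del (T - a)) by (apply Rmin_glb_lt; lra).
  assert (0 <= f s) by (apply Hs; unfold s; lra).
  assert (0 < - f s) by (apply Hd; unfold s; rewrite Rabs_left; lra).
  lra.
Qed.

Lemma nonneg_right_extension f fd T : derivable_pt_lim f T fd ->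
  0 <= f T -> (f T = 0 -> 0 < fd) ->
  exists del, 0 < del /\ forall s, 0 <= s < del -> 0 <= f (T + s).
Proof.
  intros Hf HfT Hfd. destruct (Req_dec (f T) 0) as [Hz|Hnz].
  - destruct (derivable_pt_lim_pos_right f T fd Hf (Hfd Hz)) as [del [Hdel Hd]].
    exists del; split; [exact Hdel|]. intros s Hs.
    destruct (Req_dec s 0) as [->|]; [rewrite Rplus_0_r; lra|].
    specialize (Hd s ltac:(lra)). lra.
  - destruct (continuity_pt_pos_nbhd f T) as [del [Hdel Hd]].
    { apply derivable_continuous_pt. now exists fd. }
    { lra. }
    exists del; split; [exact Hdel|]. intros s Hs. left. apply Hd.
    replace (T + s - T) with s by ring. rewrite Rabs_right; lra.
Qed.

Section Barrier.

Variables (m : nat) (g gd : nat -> R -> R) (a b : R).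
Hypothesis Hab : a <= b.
Hypothesis Hg_deriv : forall k t, (k < m)%nat -> a <= t <= b -> derivable_pt_lim (g k) t (gd k t).
Hypothesis Hg_init : forall k, (k < m)%nat -> 0 <= g k a.
Hypothesis Hg_inward : forall t, a <= t < b -> (forall k, (k < m)%nat -> 0 <= g k t) ->
  forall k, (k < m)%nat -> g k t = 0 -> 0 < gd k t.

(* The last time [T] up to which all constraints hold cannot be smaller than [b]: at [T] they
   hold by continuity, and the inward condition pushes them a little beyond [T]. *)
Lemma barrier_nonneg : forall t, a <= t <= b -> forall k, (k < m)%nat -> 0 <= g k t.
Proof.
  set (ok := fun s => forall k, (k < m)%nat -> 0 <= g k s).
  set (E := fun t => a <= t <= b /\ forall s, a <= s <= t -> ok s).
  assert (Ea : E a) by (split; [lra|intros s Hs; replace s with a by lra; exact Hg_init]).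
  assert (Ebound : bound E) by (exists b; intros t [Ht _]; lra).
  destruct (completeness E Ebound (ex_intro _ a Ea)) as [T [HTub HTlub]].
  assert (HaT : a <= T) by (now apply HTub).
  assert (HTb : T <= b) by (apply HTlub; intros t [Ht _]; lra).
  assert (Hbefore : forall s, a <= s < T -> ok s).
  { intros s Hs. destruct (classic (exists t, E t /\ s < t)) as [[t [[_ Et] Hst]]|Hno].
    - apply Et; lra.
    - exfalso. assert (Hub : is_upper_bound E s).
      { intros t Et. apply Rnot_lt_le. intros Hst. apply Hno. exists t; split; [exact Et|lra]. }
      specialize (HTlub s Hub). lra. }
  assert (HT : ok T).
  { destruct (Req_dec T a) as [->|HTa]; [exact Hg_init|].
    intros k Hk. apply (nonneg_at_left_limit (g k) a T); [lra| |].
    - apply derivable_continuous_pt. exists (gd k T). apply Hg_deriv; [exact Hk|lra].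
    - intros s Hs. now apply Hbefore. }
  assert (HTeq : T = b).
  { destruct (Req_dec T b) as [|HTb']; [assumption|exfalso].
    destruct (finite_common_delta m (fun k s => 0 <= g k (T + s))) as [del [Hdel Hd]].
    { intros k Hk. apply (nonneg_right_extension (g k) (gd k T));
        [apply Hg_deriv; [exact Hk|lra]|now apply HT|].
      apply Hg_inward; [lra|exact HT|exact Hk]. }
    set (s := T + Rmin del (b - T) / 2).
    assert (Rmin del (b - T) <= del) by apply Rmin_l.
    assert (Rmin del (b - T) <= b - T) by apply Rmin_r.
    assert (0 < Rmin del (b - T)) by (apply Rmin_glb_lt; lra).
    assert (Es : E s).
    { split; [unfold s; lra|]. intros u Hu. destruct (Rlt_dec u T); [apply Hbefore; lra|].
      intros k Hk. replace u with (T + (u - T)) by ring. apply Hd; [exact Hk|unfold s in Hu; lra]. }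
    specialize (HTub s Es). unfold s in HTub. lra. }
  intros t Ht. destruct (Req_dec t T) as [->|]; [exact HT|apply Hbefore; lra].
Qed.

End Barrier.

Lemma box_invariant n (x xd : R -> nat -> R) (L U Ld Ud : nat -> R -> R) a b : a <= b ->
  (forall i t, (i < n)%nat -> a <= t <= b -> derivable_pt_lim (fun s => x s i) t (xd t i)) ->
  (forall i t, (i < n)%nat -> a <= t <= b -> derivable_pt_lim (L i) t (Ld i t)) ->
  (forall i t, (i < n)%nat -> a <= t <= b -> derivable_pt_lim (U i) t (Ud i t)) ->
  (forall i, (i < n)%nat -> L i a <= x a i <= U i a) ->
  (forall t, a <= t < b -> (forall j, (j < n)%nat -> L j t <= x t j <= U j t) ->
     forall i, (i < n)%nat ->
       (x t i = L i t -> Ld i t < xd t i) /\ (x t i = U i t -> xd t i < Ud i t)) ->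
  forall t, a <= t <= b -> forall i, (i < n)%nat -> L i t <= x t i <= U i t.
Proof.
  intros Hab Dx DL DU Hinit Hinward.
  (* constraint [k < n] is [x_k >= L_k], constraint [n + i] is [x_i <= U_i] *)
  set (g := fun k t => if (k <? n)%nat then x t k - L k t else U (k - n)%nat t - x t (k - n)%nat).
  set (gd := fun k t => if (k <? n)%nat then xd t k - Ld k t else Ud (k - n)%nat t - xd t (k - n)%nat).
  assert (Hlow : forall i t, (i < n)%nat -> g i t = x t i - L i t /\ gd i t = xd t i - Ld i t).
  { intros i t Hi. unfold g, gd. destruct (Nat.ltb_spec i n); [split; reflexivity|lia]. }
  assert (Hup : forall i t, (i < n)%nat ->
            g (n + i)%nat t = U i t - x t i /\ gd (n + i)%nat t = Ud i t - xd t i).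
  { intros i t Hi. unfold g, gd. destruct (Nat.ltb_spec (n + i) n); [lia|].
    replace (n + i - n)%nat with i by lia. split; reflexivity. }
  assert (Hsplit : forall k, (k < 2 * n)%nat ->
            (k < n)%nat \/ exists i, (i < n)%nat /\ k = (n + i)%nat).
  { intros k Hk. destruct (Nat.lt_ge_cases k n); [now left|right; exists (k - n)%nat; split; lia]. }
  assert (Hbox : forall t, a <= t <= b ->
            (forall k, (k < 2 * n)%nat -> 0 <= g k t) ->
            forall i, (i < n)%nat -> L i t <= x t i <= U i t).
  { intros t Ht Hg i Hi. destruct (Hlow i t Hi) as [Hl _]. destruct (Hup i t Hi) as [Hu _].
    specialize (Hg i ltac:(lia)) as Hgl. specialize (Hg (n + i)%nat ltac:(lia)) as Hgu. lra. }
  intros t Ht. apply Hbox; [exact Ht|]. apply (barrier_nonneg (2 * n) g gd a b Hab); [| | |exact Ht].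
  - intros k u Hk Hu. destruct (Hsplit k Hk) as [Hkn|[i [Hi ->]]].
    + destruct (Hlow k u Hkn) as [_ ->]. unfold g. destruct (Nat.ltb_spec k n); [|lia].
      apply (derivable_pt_lim_minus (fun s => x s k)); auto.
    + destruct (Hup i u Hi) as [_ ->]. unfold g. destruct (Nat.ltb_spec (n + i) n); [lia|].
      replace (n + i - n)%nat with i by lia.
      apply (derivable_pt_lim_minus _ (fun s => x s i)); auto.
  - intros k Hk. destruct (Hsplit k Hk) as [Hkn|[i [Hi ->]]].
    + destruct (Hlow k a Hkn) as [-> _]. specialize (Hinit k Hkn). lra.
    + destruct (Hup i a Hi) as [-> _]. specialize (Hinit i Hi). lra.
  - intros u Hu Hg k Hk Hgk. assert (Hb := Hbox u ltac:(lra) Hg).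
    destruct (Hsplit k Hk) as [Hkn|[i [Hi ->]]].
    + destruct (Hlow k u Hkn) as [Hl Hld]. rewrite Hld.
      destruct (Hinward u Hu Hb k Hkn) as [Hin _]. specialize (Hin ltac:(lra)). lra.
    + destruct (Hup i u Hi) as [Hl Hld]. rewrite Hld.
      destruct (Hinward u Hu Hb i Hi) as [_ Hin]. specialize (Hin ltac:(lra)). lra.
Qed.

Lemma sis_field_at_one n d B x i : x i = 1 -> sis_field n d B x i = - d i.
Proof. intros Hxi. unfold sis_field. rewrite Hxi. ring. Qed.

Section SIS.

Variables (n : nat) (d : nat -> R) (B : nat -> nat -> R).
Hypothesis Hd : forall i, (i < n)%nat -> 0 < d i.
Hypothesis HB : forall i j, (i < n)%nat -> (j < n)%nat -> 0 <= B i j.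

Lemma rowsum_nonneg i : (i < n)%nat -> 0 <= rsum n (fun j => B i j).
Proof. intros Hi. apply rsum_nonneg. intros j Hj. now apply HB. Qed.

Lemma rowsum_le_total i : (i < n)%nat ->
  rsum n (fun j => B i j) <= rsum n (fun k => rsum n (fun j => B k j)).
Proof.
  intros Hi. apply (rsum_ge_term n (fun k => rsum n (fun j => B k j))); [|exact Hi].
  intros k Hk. now apply rowsum_nonneg.
Qed.

Lemma infection_pressure_nonneg i x : (i < n)%nat -> in_Xi n x ->
  0 <= rsum n (fun j => B i j * x j).
Proof.
  intros Hi Hx. apply rsum_nonneg. intros j Hj.
  specialize (Hx j Hj). specialize (HB i j Hi Hj). nra.
Qed.

Lemma infection_pressure_le_rowsum i x : (i < n)%nat -> (forall j, (j < n)%nat -> x j <= 1) ->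
  rsum n (fun j => B i j * x j) <= rsum n (fun j => B i j).
Proof.
  intros Hi Hx. apply rsum_le. intros j Hj.
  specialize (Hx j Hj). specialize (HB i j Hi Hj). nra.
Qed.

Lemma sis_field_on_negative_face S eta i x : (i < n)%nat ->
  rsum n (fun j => B i j) <= S -> 0 < eta <= 1 ->
  (forall j, (j < n)%nat -> - eta <= x j) -> x i = - eta ->
  - (2 * S + 1) * eta < sis_field n d B x i.
Proof.
  intros Hi HS Heta Hx Hxi.
  assert (Hp : - eta * rsum n (fun j => B i j) <= rsum n (fun j => B i j * x j)).
  { rewrite <- rsum_scal. apply rsum_le. intros j Hj.
    specialize (Hx j Hj). specialize (HB i j Hi Hj). nra. }
  assert (Hr := rowsum_nonneg i Hi). assert (Hdi := Hd i Hi).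
  unfold sis_field. rewrite Hxi.
  set (P := rsum n (fun j => B i j * x j)) in *.
  assert ((1 + eta) * (- eta * S) <= (1 + eta) * P) by (apply Rmult_le_compat_l; nra).
  assert (eta * eta * S <= eta * S) by (apply Rmult_le_compat_r; nra).
  assert (0 <= d i * eta) by nra.
  nra.
Qed.

Lemma sis_field_near_one eta i x : (i < n)%nat -> 0 < eta <= 1 / 2 ->
  eta * (rsum n (fun j => B i j) + 1) <= d i / 2 -> in_Xi n x -> x i = 1 - eta ->
  sis_field n d B x i < 0.
Proof.
  intros Hi Heta Hsmall Hx Hxi.
  assert (Hp := infection_pressure_le_rowsum i x Hi (fun j Hj => proj2 (Hx j Hj))).
  assert (Hp0 := infection_pressure_nonneg i x Hi Hx).
  assert (Hdi := Hd i Hi).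
  unfold sis_field. rewrite Hxi. replace (1 - (1 - eta)) with eta by ring.
  nra.
Qed.

Lemma equilibrium_zero_propagates xe : in_Xi n xe ->
  (forall i, (i < n)%nat -> sis_field n d B xe i = 0) ->
  forall j i, reach n B j i -> xe i = 0 -> xe j = 0.
Proof.
  intros HX Heq j i Hr. induction Hr as [j i Hj Hi HBij|j k i _ IH1 _ IH2]; intros Hxi.
  - assert (Hp : rsum n (fun k => B i k * xe k) = 0).
    { specialize (Heq i Hi). unfold sis_field in Heq. rewrite Hxi in Heq. lra. }
    assert (Hterm : B i j * xe j <= rsum n (fun k => B i k * xe k)).
    { apply (rsum_ge_term n (fun k => B i k * xe k)); [|exact Hj].
      intros k Hk. specialize (HX k Hk). specialize (HB i k Hi Hk). nra. }
    specialize (HX j Hj). specialize (HB i j Hi Hj).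
    assert (Hz : B i j * xe j = 0) by nra.
    destruct (Rmult_integral _ _ Hz); [contradiction|assumption].
  - auto.
Qed.

Lemma equilibrium_positive xe : irreducible n B -> in_Xi n xe -> ~ is_zero_vec n xe ->
  (forall i, (i < n)%nat -> sis_field n d B xe i = 0) ->
  forall i, (i < n)%nat -> 0 < xe i.
Proof.
  intros Hirr HX Hnz Heq i Hi.
  destruct (not_zero_vec_ex n xe Hnz) as [k [Hk Hxk]].
  destruct (Rlt_dec 0 (xe i)) as [|Hxi]; [assumption|exfalso].
  assert (Hz : xe i = 0) by (specialize (HX i Hi); lra).
  destruct (Nat.eq_dec i k) as [->|Hik]; [contradiction|].
  apply Hxk, (equilibrium_zero_propagates xe HX Heq k i); [now apply Hirr|exact Hz].
Qed.

Variable x : R -> nat -> R.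
Hypothesis Hsol : is_solution n d B x.

(* The face [x_i = 0] is only weakly repelling, so we use the exponentially vanishing
   barrier [x_i >= - del e^(K t)] with [K] exceeding twice the total weight of [B]. *)
Lemma solution_above_vanishing_barrier t0 del : in_Xi n (x 0) ->
  let K := 2 * rsum n (fun k => rsum n (fun j => B k j)) + 1 in
  0 < del <= exp (- K * t0) ->
  forall t, 0 <= t <= t0 -> forall i, (i < n)%nat -> - del * exp (K * (t - 0)) <= x t i <= 1.
Proof.
  intros H0 K Hdel.
  assert (HK : 1 <= K).
  { unfold K. assert (0 <= rsum n (fun k => rsum n (fun j => B k j)))
      by (apply rsum_nonneg; intros; now apply rowsum_nonneg). lra. }
  destruct (Rle_dec 0 t0) as [Ht0|Ht0]; [|intros t Ht; lra].
  apply (box_invariant n x (fun t i => sis_field n d B (x t) i)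
           (fun _ t => - del * exp (K * (t - 0))) (fun _ _ => 1)
           (fun _ t => - del * K * exp (K * (t - 0))) (fun _ _ => 0) 0 t0 Ht0).
  - intros i t Hi Ht. apply Hsol; [lra|exact Hi].
  - intros. apply derivable_pt_lim_exp_affine.
  - intros. apply derivable_pt_lim_const.
  - intros i Hi. rewrite Rminus_0_r, Rmult_0_r, exp_0. specialize (H0 i Hi). lra.
  - intros t Ht Hbox i Hi. split; intros Hxi.
    + set (eta := del * exp (K * (t - 0))).
      assert (Heta : 0 < eta <= 1).
      { split; [apply Rmult_lt_0_compat; [lra|apply exp_pos]|].
        apply Rle_trans with (exp (- K * t0) * exp (K * t0)).
        - apply Rmult_le_compat; [lra|left; apply exp_pos|lra|apply exp_le; nra].
        - rewrite <- exp_plus. replace (- K * t0 + K * t0) with 0 by ring. rewrite exp_0. lra. }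
      replace (- del * K * exp (K * (t - 0))) with (- K * eta) by (unfold eta; ring).
      apply (sis_field_on_negative_face _ eta i (x t) Hi (rowsum_le_total i Hi) Heta).
      * intros j Hj. specialize (Hbox j Hj). unfold eta. lra.
      * unfold eta. lra.
    + rewrite (sis_field_at_one _ _ _ _ _ Hxi). specialize (Hd i Hi). lra.
Qed.

Lemma solution_stays_in_Xi : in_Xi n (x 0) -> forall t, 0 <= t -> in_Xi n (x t).
Proof.
  intros H0 t0 Ht0 i Hi.
  assert (Hbar := solution_above_vanishing_barrier t0). simpl in Hbar.
  set (K := 2 * rsum n (fun k => rsum n (fun j => B k j)) + 1) in Hbar.
  assert (HE : 0 < exp (- K * t0)) by apply exp_pos.
  assert (HEE : exp (- K * t0) * exp (K * (t0 - 0)) = 1).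
  { rewrite <- exp_plus. replace (- K * t0 + K * (t0 - 0)) with 0 by ring. apply exp_0. }
  split; [|apply (Hbar (exp (- K * t0)) H0 ltac:(lra) t0 ltac:(lra) i Hi)].
  apply Rnot_lt_le. intros Hneg.
  set (del := Rmin (exp (- K * t0)) (- x t0 i * exp (- K * t0) / 2)).
  assert (Hdel : 0 < del <= exp (- K * t0)) by (split; [apply Rmin_glb_lt; nra|apply Rmin_l]).
  assert (Hdel' : del <= - x t0 i * exp (- K * t0) / 2) by apply Rmin_r.
  specialize (Hbar del H0 Hdel t0 ltac:(lra) i Hi).
  assert (del * exp (K * (t0 - 0)) <= - x t0 i / 2).
  { apply Rle_trans with (- x t0 i * exp (- K * t0) / 2 * exp (K * (t0 - 0))).
    - apply Rmult_le_compat_r; [left; apply exp_pos|exact Hdel'].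
    - replace (- x t0 i * exp (- K * t0) / 2 * exp (K * (t0 - 0)))
        with (- x t0 i / 2 * (exp (- K * t0) * exp (K * (t0 - 0)))) by field.
      rewrite HEE. lra. }
  lra.
Qed.

Hypothesis HX : forall t, 0 <= t -> in_Xi n (x t).

(* An infected node recovers at most at rate [d i], so it stays above a decaying exponential. *)
Lemma solution_positive_persists i s : (i < n)%nat -> 0 <= s -> 0 < x s i ->
  forall t, s <= t -> 0 < x t i.
Proof.
  intros Hi Hs Hpos t Ht.
  set (L := fun u => x s i / 2 * exp (-2 * d i * (u - s))).
  assert (HL : forall u, 0 < L u) by (intros; unfold L; apply Rmult_lt_0_compat; [lra|apply exp_pos]).
  enough (L t <= x t i) by (specialize (HL t); lra).
  enough (0 <= x t i - L t) by lra.
  refine (barrier_nonneg 1 (fun _ u => x u i - L u)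
            (fun _ u => sis_field n d B (x u) i - x s i / 2 * (-2 * d i) * exp (-2 * d i * (u - s)))
            s t Ht _ _ _ t ltac:(lra) 0%nat ltac:(lia)); [| |intros u Hu _ k _ Hz; simpl in Hz |- *].
  - intros k u _ Hu. apply (derivable_pt_lim_minus (fun u => x u i) L).
    + apply Hsol; [lra|exact Hi].
    + apply derivable_pt_lim_exp_affine.
  - intros k _. unfold L. rewrite Rminus_diag, Rmult_0_r, exp_0. lra.
  - assert (Hxu : x u i = L u) by lra.
    assert (Hp := infection_pressure_nonneg i (x u) Hi (HX u ltac:(lra))).
    assert (Hx1 := proj2 (HX u ltac:(lra) i Hi)).
    specialize (HL u). assert (Hdi := Hd i Hi).
    replace (x s i / 2 * (-2 * d i) * exp (-2 * d i * (u - s))) with (-2 * d i * L u)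
      by (unfold L; ring).
    unfold sis_field. rewrite Hxu in *.
    assert (0 <= (1 - L u) * rsum n (fun j => B i j * x u j)) by (apply Rmult_le_pos; lra).
    nra.
Qed.

Lemma solution_positive_along_edge i j : (i < n)%nat -> (j < n)%nat -> 0 < B i j ->
  (forall t, 0 < t -> 0 < x t j) -> forall t, 0 < t -> 0 < x t i.
Proof.
  intros Hi Hj HBij Hxj t Ht.
  destruct (Rlt_dec 0 (x t i)) as [|Hxi]; [assumption|exfalso].
  assert (Hzero : forall s, 0 <= s <= t -> x s i = 0).
  { intros s Hs. destruct (Rlt_dec 0 (x s i)) as [Hps|Hps].
    - assert (0 < x t i) by (apply (solution_positive_persists i s); lra || assumption). lra.
    - specialize (HX s ltac:(lra) i Hi). lra. }
  set (s := t / 2).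
  (* at [s] node [i] is still healthy while its infected neighbour [j] pushes it upward *)
  destruct (derivable_pt_lim_pos_right _ _ _ (Hsol s ltac:(unfold s; lra) i Hi)) as [del [Hdel Hinc]].
  - unfold sis_field. rewrite (Hzero s) by (unfold s; lra).
    assert (Hterm : B i j * x s j <= rsum n (fun k => B i k * x s k)).
    { apply (rsum_ge_term n (fun k => B i k * x s k)); [|exact Hj].
      intros k Hk. assert (Hk' := HX s ltac:(unfold s; lra) k Hk). specialize (HB i k Hi Hk). nra. }
    assert (0 < B i j * x s j) by (apply Rmult_lt_0_compat; [exact HBij|apply Hxj; unfold s; lra]).
    lra.
  - set (h := Rmin del (t / 2) / 2).
    assert (Rmin del (t / 2) <= del) by apply Rmin_l.
    assert (Rmin del (t / 2) <= t / 2) by apply Rmin_r.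
    assert (0 < Rmin del (t / 2)) by (apply Rmin_glb_lt; lra).
    specialize (Hinc h ltac:(unfold h; lra)).
    rewrite (Hzero s), (Hzero (s + h)) in Hinc; unfold s, h in *; lra.
Qed.

Lemma solution_positive_along_reach j i : reach n B j i ->
  (forall t, 0 < t -> 0 < x t j) -> forall t, 0 < t -> 0 < x t i.
Proof.
  intros Hr. induction Hr as [j i Hj Hi HBij|j k i _ IH1 _ IH2]; intros Hxj.
  - apply (solution_positive_along_edge i j Hi Hj); [|exact Hxj].
    specialize (HB i j Hi Hj). lra.
  - auto.
Qed.

Lemma solution_positive : irreducible n B -> ~ is_zero_vec n (x 0) ->
  forall i, (i < n)%nat -> forall t, 0 < t -> 0 < x t i.
Proof.
  intros Hirr Hnz i Hi.
  destruct (not_zero_vec_ex n (x 0) Hnz) as [k [Hk Hxk]].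
  assert (Hxk0 : forall t, 0 < t -> 0 < x t k).
  { intros t Ht. apply (solution_positive_persists k 0); [exact Hk|lra| |lra].
    specialize (HX 0 ltac:(lra) k Hk). lra. }
  destruct (Nat.eq_dec i k) as [->|Hik]; [exact Hxk0|].
  apply (solution_positive_along_reach k i); [now apply Hirr|exact Hxk0].
Qed.

End SIS.

Section Epidemic.

Variables (n : nat) (d : nat -> R) (B : nat -> nat -> R) (phi : R) (y : nat -> R).
Hypothesis Hd : forall i, (i < n)%nat -> 0 < d i.
Hypothesis HB : forall i j, (i < n)%nat -> (j < n)%nat -> 0 <= B i j.
Hypothesis Hphi : 0 < phi.
Hypothesis Hy : forall i, (i < n)%nat -> 0 < y i <= 1.
Hypothesis Hrow : forall i, (i < n)%nat -> rsum n (fun j => B i j * y j) = (phi + d i) * y i.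

Lemma solution_stays_in_box (x : R -> nat -> R) (L U : nat -> R) s t :
  is_solution n d B x -> 0 <= s <= t ->
  (forall i, (i < n)%nat -> L i <= x s i <= U i) ->
  (forall u, s <= u < t -> (forall j, (j < n)%nat -> L j <= x u j <= U j) -> forall i, (i < n)%nat ->
     (x u i = L i -> 0 < sis_field n d B (x u) i) /\ (x u i = U i -> sis_field n d B (x u) i < 0)) ->
  forall i, (i < n)%nat -> L i <= x t i <= U i.
Proof.
  intros Hsol Hst Hinit Hinward i Hi.
  apply (box_invariant n x (fun u j => sis_field n d B (x u) j) (fun j _ => L j) (fun j _ => U j)
           (fun _ _ => 0) (fun _ _ => 0) s t ltac:(lra)); [| | | | |lra|exact Hi].
  - intros j u Hj Hu. apply Hsol; [lra|exact Hj].
  - intros. apply derivable_pt_lim_const.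
  - intros. apply derivable_pt_lim_const.
  - exact Hinit.
  - exact Hinward.
Qed.

Lemma sis_field_lower_face c i x : (i < n)%nat -> 0 < c -> c * (phi + d i) <= phi / 2 ->
  (forall j, (j < n)%nat -> c * y j <= x j) -> x i = c * y i ->
  c * y i * phi / 2 <= sis_field n d B x i.
Proof.
  intros Hi Hc Hcsmall Hx Hxi.
  assert (Hp : c * ((phi + d i) * y i) <= rsum n (fun j => B i j * x j)).
  { rewrite <- Hrow, <- rsum_scal by exact Hi. apply rsum_le. intros j Hj.
    specialize (Hx j Hj). specialize (HB i j Hi Hj). nra. }
  assert (Hyi := Hy i Hi). assert (Hdi := Hd i Hi).
  unfold sis_field. rewrite Hxi.
  set (P := rsum n (fun j => B i j * x j)) in *.
  (* the loss [d_i c y_i] and the saturation [c y_i P] are both dominated by [c y_i (phi + d_i)] *)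
  assert (Hcy : c * y i <= 1 / 2) by nra.
  assert ((1 - c * y i) * (c * ((phi + d i) * y i)) <= (1 - c * y i) * P)
    by (apply Rmult_le_compat_l; lra).
  assert (c * y i * (c * y i * (phi + d i)) <= c * y i * (c * (phi + d i))).
  { apply Rmult_le_compat_l; [nra|]. apply Rmult_le_compat_r; nra. }
  assert (c * y i * (c * (phi + d i)) <= c * y i * (phi / 2)) by (apply Rmult_le_compat_l; nra).
  nra.
Qed.

Definition eps := phi / (4 * (phi + rsum n d)).

Lemma total_recovery_nonneg : 0 <= rsum n d.
Proof. apply rsum_nonneg. intros i Hi. left. now apply Hd. Qed.

Lemma eps_bounds : 0 < eps < 1.
Proof.
  assert (HD := total_recovery_nonneg). unfold eps.
  split; [apply Rdiv_lt_0_compat; lra|].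
  apply (Rmult_lt_reg_r (4 * (phi + rsum n d))); [lra|].
  replace (phi / (4 * (phi + rsum n d)) * (4 * (phi + rsum n d))) with phi by (field; lra).
  lra.
Qed.

Lemma eps_small c i : 0 < c <= 2 * eps -> (i < n)%nat -> c * (phi + d i) <= phi / 2.
Proof.
  intros Hc Hi. assert (HD := total_recovery_nonneg).
  assert (Hdi : d i <= rsum n d) by (apply (rsum_ge_term n d); [intros; left; now apply Hd|exact Hi]).
  assert (Heps : 2 * eps * (phi + rsum n d) = phi / 2) by (unfold eps; field; lra).
  assert (0 <= d i) by (left; now apply Hd).
  apply Rle_trans with (2 * eps * (phi + rsum n d)); [|lra].
  apply Rmult_le_compat; lra.
Qed.

Lemma sis_field_lower_face_pos c i x : (i < n)%nat -> 0 < c <= 2 * eps ->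
  (forall j, (j < n)%nat -> c * y j <= x j) -> x i = c * y i -> 0 < sis_field n d B x i.
Proof.
  intros Hi Hc Hx Hxi.
  assert (H := sis_field_lower_face c i x Hi (proj1 Hc) (eps_small c i Hc Hi) Hx Hxi).
  assert (0 < c * y i * phi)
    by (apply Rmult_lt_0_compat; [apply Rmult_lt_0_compat|]; [lra|apply Hy|]; tauto).
  lra.
Qed.

Lemma M_invariant : pos_invariant n d B (in_M n eps y).
Proof.
  intros x Hsol H0 t Ht i0 Hi0.
  apply (solution_stays_in_box x (fun i => eps * y i) (fun _ => 1) 0 t Hsol ltac:(lra) H0);
    [clear i0 Hi0|exact Hi0].
  intros u Hu Hbox i Hi. split; intros Hxi.
  - apply (sis_field_lower_face_pos eps i (x u) Hi); [pose proof eps_bounds; lra| |exact Hxi].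
    intros j Hj. apply Hbox, Hj.
  - rewrite (sis_field_at_one _ _ _ _ _ Hxi). specialize (Hd i Hi). lra.
Qed.

Lemma interior_margin x0 : in_int_M n eps y x0 ->
  exists eta, 0 < eta <= eps / 2 /\ forall i, (i < n)%nat ->
    (eps + eta) * y i <= x0 i <= 1 - eta /\ eta * (rsum n (fun j => B i j) + 1) <= d i / 2.
Proof.
  intros Hx0.
  destruct (finite_pos_lower_bound n (fun i =>
              Rmin (Rmin (x0 i - eps * y i) (1 - x0 i)) (d i / (2 * (rsum n (fun j => B i j) + 1)))))
    as [c [Hc Hci]].
  { intros i Hi. specialize (Hx0 i Hi).
    assert (0 < d i / (2 * (rsum n (fun j => B i j) + 1))).
    { apply Rdiv_lt_0_compat; [now apply Hd|]. assert (Hr := rowsum_nonneg n B HB i Hi). lra. }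
    repeat apply Rmin_glb_lt; lra. }
  assert (He := eps_bounds).
  exists (Rmin c eps / 2).
  assert (Rmin c eps <= c) by apply Rmin_l. assert (Rmin c eps <= eps) by apply Rmin_r.
  assert (0 < Rmin c eps) by (apply Rmin_glb_lt; lra).
  split; [lra|]. intros i Hi. specialize (Hci i Hi). simpl in Hci.
  assert (Rmin (Rmin (x0 i - eps * y i) (1 - x0 i)) (d i / (2 * (rsum n (fun j => B i j) + 1)))
          <= Rmin (x0 i - eps * y i) (1 - x0 i)) by apply Rmin_l.
  assert (Rmin (x0 i - eps * y i) (1 - x0 i) <= x0 i - eps * y i) by apply Rmin_l.
  assert (Rmin (x0 i - eps * y i) (1 - x0 i) <= 1 - x0 i) by apply Rmin_r.
  assert (Hdc : c <= d i / (2 * (rsum n (fun j => B i j) + 1))).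
  { eapply Rle_trans; [exact Hci|apply Rmin_r]. }
  assert (Hr := rowsum_nonneg n B HB i Hi). assert (Hyi := Hy i Hi).
  repeat split; [nra|lra|].
  apply Rle_trans with (c / 2 * (rsum n (fun j => B i j) + 1)); [apply Rmult_le_compat_r; lra|].
  apply Rmult_le_compat_r with (r := rsum n (fun j => B i j) + 1) in Hdc; [|lra].
  replace (d i / (2 * (rsum n (fun j => B i j) + 1)) * (rsum n (fun j => B i j) + 1)) with (d i / 2)
    in Hdc by (field; lra).
  nra.
Qed.

(* A solution starting in the interior stays in the smaller box [(eps + eta) y <= x <= 1 - eta]. *)
Lemma int_M_invariant : pos_invariant n d B (in_int_M n eps y).
Proof.
  intros x Hsol H0 t Ht.
  destruct (interior_margin (x 0) H0) as [eta [Heta Hmargin]].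
  assert (He := eps_bounds).
  assert (Hbox := solution_stays_in_box x (fun i => (eps + eta) * y i) (fun _ => 1 - eta) 0 t Hsol
                    ltac:(lra) (fun i Hi => proj1 (Hmargin i Hi))).
  intros i Hi. assert (Hyi := Hy i Hi).
  enough ((eps + eta) * y i <= x t i <= 1 - eta) by nra.
  apply Hbox; [|exact Hi]. clear i Hi Hyi.
  intros u Hu Hb i Hi. split; intros Hxi.
  - apply (sis_field_lower_face_pos (eps + eta) i (x u) Hi); [lra| |exact Hxi].
    intros j Hj. apply Hb, Hj.
  - apply (sis_field_near_one n d B Hd HB eta i (x u) Hi); [lra|apply Hmargin, Hi| |exact Hxi].
    intros j Hj. specialize (Hb j Hj). specialize (Hy j Hj). nra.
Qed.

Lemma faces_transversal i : (i < n)%nat ->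
  (forall x, in_P n eps y i x -> - sis_field n d B x i < 0) /\
  (forall x, in_Q n eps y i x -> sis_field n d B x i < 0).
Proof.
  intros Hi. assert (He := eps_bounds). split.
  - intros x [Hxi Hx].
    enough (0 < sis_field n d B x i) by lra.
    apply (sis_field_lower_face_pos eps i x Hi); [lra| |exact Hxi].
    intros j Hj. destruct (Nat.eq_dec j i) as [->|Hji]; [lra|now apply Hx].
  - intros x [Hxi _]. rewrite (sis_field_at_one _ _ _ _ _ Hxi). specialize (Hd i Hi). lra.
Qed.

(* Below [eps y] the lower face of the box [c y <= x] repels at rate [phi / 2], so the
   barrier [c e^(phi (t - s) / 4) y] can be pushed up to [eps y] in finite time. *)
Lemma solution_reaches_M (x : R -> nat -> R) s c : is_solution n d B x ->
  (forall t, 0 <= t -> in_Xi n (x t)) -> 0 <= s -> 0 < c <= eps ->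
  (forall i, (i < n)%nat -> c * y i <= x s i) ->
  exists T, s <= T /\ in_M n eps y (x T).
Proof.
  intros Hsol HX Hs Hc Hxs.
  assert (He := eps_bounds).
  set (r := phi / 4). assert (Hr : 0 < r) by (unfold r; lra).
  destruct (exp_hitting_time c eps r s Hc Hr) as [T [HT HexpT]].
  exists T. split; [exact HT|]. intros i Hi.
  split; [|apply (HX T ltac:(lra) i Hi)].
  rewrite <- HexpT. replace (c * exp (r * (T - s)) * y i) with (c * y i * exp (r * (T - s))) by ring.
  refine (proj1 (box_invariant n x (fun u j => sis_field n d B (x u) j)
            (fun j u => c * y j * exp (r * (u - s))) (fun _ _ => 2)
            (fun j u => c * y j * r * exp (r * (u - s))) (fun _ _ => 0) s T HT
            _ _ _ _ _ T ltac:(lra) i Hi)).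
  - intros j u Hj Hu. apply Hsol; [lra|exact Hj].
  - intros. apply derivable_pt_lim_exp_affine.
  - intros. apply derivable_pt_lim_const.
  - intros j Hj. rewrite Rminus_diag, Rmult_0_r, exp_0, Rmult_1_r.
    split; [now apply Hxs|]. specialize (HX s Hs j Hj). lra.
  - intros u Hu Hbox j Hj. split; intros Hxj.
    + set (cu := c * exp (r * (u - s))).
      assert (Hcu : 0 < cu <= eps).
      { split; [apply Rmult_lt_0_compat; [lra|apply exp_pos]|].
        rewrite <- HexpT. apply Rmult_le_compat_l; [lra|]. apply exp_le. nra. }
      assert (Hf := sis_field_lower_face cu j (x u) Hj (proj1 Hcu) (eps_small cu j ltac:(lra) Hj)).
      assert (cu * y j * phi / 2 <= sis_field n d B (x u) j).
      { apply Hf.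
        - intros k Hk. specialize (Hbox k Hk). unfold cu. lra.
        - rewrite Hxj. unfold cu. ring. }
      replace (c * y j * r * exp (r * (u - s))) with (cu * y j * phi / 4) by (unfold cu, r; field).
      assert (0 < cu * y j * phi)
        by (apply Rmult_lt_0_compat; [apply Rmult_lt_0_compat|]; [lra|apply Hy|]; tauto).
      lra.
    + specialize (HX u ltac:(lra) j Hj). lra.
Qed.

Lemma boundary_solution_enters_M (x : R -> nat -> R) : irreducible n B -> is_solution n d B x ->
  in_Xi n (x 0) -> ~ is_zero_vec n (x 0) ->
  exists kappa, 0 < kappa /\ in_M n eps y (x kappa).
Proof.
  intros Hirr Hsol H0 Hnz.
  assert (HX := solution_stays_in_Xi n d B Hd HB x Hsol H0).
  assert (Hpos := solution_positive n d B Hd HB x Hsol HX Hirr Hnz).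
  destruct (finite_pos_lower_bound n (fun i => x 1 i)) as [c1 [Hc1 Hc1x]].
  { intros i Hi. apply Hpos; [exact Hi|lra]. }
  assert (He := eps_bounds).
  destruct (solution_reaches_M x 1 (Rmin c1 eps) Hsol HX ltac:(lra)) as [T [HT HM]].
  - split; [apply Rmin_glb_lt; lra|apply Rmin_r].
  - intros i Hi. specialize (Hc1x i Hi). assert (Hyi := Hy i Hi).
    assert (Rmin c1 eps <= c1) by apply Rmin_l.
    assert (0 < Rmin c1 eps) by (apply Rmin_glb_lt; lra). nra.
  - exists T. split; [lra|exact HM].
Qed.

(* At the coordinate [m] minimising [x_m / y_m], a positive equilibrium sits on the lower face
   of the box [c y <= x]; that face repels whenever [c <= 2 eps], so [c > 2 eps]. *)
Lemma equilibrium_in_int_M xe : irreducible n B -> in_Xi n xe -> ~ is_zero_vec n xe ->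
  (forall i, (i < n)%nat -> sis_field n d B xe i = 0) -> in_int_M n eps y xe.
Proof.
  intros Hirr HX Hnz Heq.
  assert (Hpos := equilibrium_positive n d B HB xe Hirr HX Hnz Heq).
  assert (Hn : (0 < n)%nat).
  { destruct n; [|lia]. exfalso. apply Hnz. intros i Hi. lia. }
  destruct (finite_argmin n (fun j => xe j / y j) Hn) as [m [Hm Hmin]].
  set (c := xe m / y m).
  assert (Hym := Hy m Hm). assert (Hxm := Hpos m Hm).
  assert (Hc : 0 < c) by (unfold c; apply Rdiv_lt_0_compat; lra).
  assert (Hcx : forall j, (j < n)%nat -> c * y j <= xe j).
  { intros j Hj. specialize (Hmin j Hj). simpl in Hmin. fold c in Hmin. assert (Hyj := Hy j Hj).
    apply Rmult_le_compat_r with (r := y j) in Hmin; [|lra].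
    replace (xe j / y j * y j) with (xe j) in Hmin by (field; lra). lra. }
  assert (Hxmc : xe m = c * y m) by (unfold c; field; lra).
  assert (He := eps_bounds).
  assert (Hc2 : 2 * eps < c).
  { apply Rnot_le_lt. intros Hle.
    assert (H := sis_field_lower_face_pos c m xe Hm ltac:(lra) Hcx Hxmc).
    rewrite (Heq m Hm) in H. lra. }
  intros i Hi. split.
  - specialize (Hcx i Hi). specialize (Hy i Hi). nra.
  - specialize (HX i Hi). destruct (Req_dec (xe i) 1) as [Hx1|Hx1]; [|lra].
    specialize (Heq i Hi). rewrite (sis_field_at_one _ _ _ _ _ Hx1) in Heq.
    specialize (Hd i Hi). lra.
Qed.

End Epidemic.

Theorem lemma4 (n : nat) (d : nat -> R) (B : nat -> nat -> R) (phi : R) (y : nat -> R)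
  (Hn : (2 <= n)%nat)
  (Hd : forall i, (i < n)%nat -> 0 < d i)
  (HB : forall i j, (i < n)%nat -> (j < n)%nat -> 0 <= B i j)
  (Hirr : irreducible n B)
  (Hphi : spectral_abscissa n (minusD_plus_B d B) phi)
  (Hphipos : 0 < phi)
  (Hypos : forall i, (i < n)%nat -> 0 < y i)
  (Hyeig : forall i, (i < n)%nat -> mat_vec n (minusD_plus_B d B) y i = phi * y i)
  (Hymax : (exists i, (i < n)%nat /\ y i = 1) /\ (forall i, (i < n)%nat -> y i <= 1)) :
  exists eps : R, 0 < eps < 1 /\
    (* (i) *)
    (pos_invariant n d B (in_M n eps y) /\ pos_invariant n d B (in_int_M n eps y)) /\
    (* (ii) *)
    (forall i, (i < n)%nat ->
       (forall x, in_P n eps y i x -> - sis_field n d B x i < 0) /\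
       (forall x, in_Q n eps y i x -> sis_field n d B x i < 0)) /\
    (* (iii) *)
    (forall x : R -> nat -> R, is_solution n d B x ->
       in_boundary_Xi n (x 0) -> ~ is_zero_vec n (x 0) ->
       exists kappa, 0 < kappa /\ in_M n eps y (x kappa)) /\
    (* (iv) *)
    (forall x : nat -> R, in_Xi n x -> ~ is_zero_vec n x ->
       (forall i, (i < n)%nat -> sis_field n d B x i = 0) ->
       in_int_M n eps y x).
Proof.
  assert (Hy : forall i, (i < n)%nat -> 0 < y i <= 1)
    by (intros i Hi; split; [apply Hypos|apply (proj2 Hymax)]; exact Hi).
  assert (Hrow : forall i, (i < n)%nat -> rsum n (fun j => B i j * y j) = (phi + d i) * y i).
  { intros i Hi. specialize (Hyeig i Hi). rewrite mat_vec_minusD_plus_B in Hyeig by exact Hi. lra. }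
  exists (eps n d phi). split; [exact (eps_bounds n d phi Hd Hphipos)|].
  split; [split|split; [|split]].
  - exact (M_invariant n d B phi y Hd HB Hphipos Hy Hrow).
  - exact (int_M_invariant n d B phi y Hd HB Hphipos Hy Hrow).
  - exact (faces_transversal n d B phi y Hd HB Hphipos Hy Hrow).
  - intros x Hsol [H0 _].
    exact (boundary_solution_enters_M n d B phi y Hd HB Hphipos Hy Hrow x Hirr Hsol H0).
  - intros x. exact (equilibrium_in_int_M n d B phi y Hd HB Hphipos Hy Hrow x Hirr).
Qed.
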